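(* Let $q=p^k$ with $p$ prime, and let $L\subseteq[q-1]$. Let $\mathcal{F}\subseteq2^{[n]}$ be $q$-modular $L$-differencing Sperner. If $\sum_{\ell\in L}v_p(\ell)<k$, then $$|\mathcal{F}|\le\sum_{i=0}^{|L|}\binom{n}{i}.$$
   Context: $v_p(m)$ is the exponent of $p$ in the integer $m$. For $L\subseteq[q-1]$, $\mathcal{F}\subseteq2^{[n]}$ is $q$-modular $L$-differencing Sperner if for all distinct $A,B\in\mathcal{F}$, $|A\setminus B|\equiv\ell\pmod q$ for some $\ell\in L$. *)

From mathcomp Require Import all_boot.
Set Implicit Arguments. Unset Strict Implicit. Unset Printing Implicit Defensive.

Definition subset_range (L : seq nat) (q : nat) : bool :=
  all (fun l => (0 < l) && (l < q)) L.

Definition modular_L_differencing_Sperner (n q : nat) (L : seq nat)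
    (F : {set {set 'I_n}}) : Prop :=
  forall A B, A \in F -> B \in F -> A != B ->
    exists2 l, l \in L & #|A :\: B| = l %[mod q].

(* The sets of F, listed as B_1, ..., B_N, give the N x N integer matrix
   M_ij = prod_(l in L) (|B_i \ B_j| + q - l).  As a function of X, the product
   prod_(l in L) (|A \ X| + q - l) is a polynomial of degree |L| in
   |A \ X| = sum_(a in A) [a notin X], hence a linear combination of the
   indicators [S and X disjoint] with |S| <= |L|; so the rank of M is at most
   sum_(i <= |L|) C(n, i).  The Sperner condition makes q = p^k divide every
   off-diagonal entry, whereas the diagonal entry d = prod_(l in L) (q - l) has
   v_p(d) <= sum_(l in L) v_p(l) < k, since v_p(q - l) = v_p(l).  Hence
   M / p^(v_p d) is a nonzero scalar matrix modulo p, so M is invertible over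
   the rationals and N = rank M. *)

From mathcomp Require Import all_boot all_algebra.
Set Implicit Arguments.
Unset Strict Implicit.
Unset Printing Implicit Defensive.
Import GRing.Theory Num.Theory.

Definition small_sets (T : finType) m := [set S : {set T} | #|S| <= m].

Lemma card_small_sets (T : finType) m :
  #|small_sets T m| = \sum_(0 <= i < m.+1) 'C(#|T|, i).
Proof.
elim: m => [|m IHm].
  by rewrite big_nat1 -card_draws; apply: eq_card => S; rewrite !inE leqn0.
rewrite big_nat_recr //= -IHm -card_draws.
set Sm1 := [set S : {set T} | #|S| == m.+1].
have -> : small_sets T m.+1 = small_sets T m :|: Sm1.
  by apply/setP => S; rewrite !inE leq_eqVlt ltnS orbC.
rewrite cardsU; suff -> : small_sets T m :&: Sm1 = set0 by rewrite cards0 subn0.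
by apply/setP => S; rewrite !inE; case: eqP => [->|]; rewrite ?ltnn ?andbF.
Qed.

Section DisjointnessRows.

Local Open Scope ring_scope.

Variables (R : fieldType) (T : finType) (N : nat) (B : 'I_N -> {set T}).

Definition disj_row (S : {set T}) : 'rV[R]_N :=
  \row_j [disjoint S & B j]%:R.

Definition disj_span m : 'M[R]_(#|small_sets T m|, N) :=
  \matrix_i disj_row (enum_val i).

Lemma disj_row_sub m (S : {set T}) :
  (#|S| <= m)%N -> (disj_row S <= disj_span m)%MS.
Proof.
move=> leSm; have Sm : S \in small_sets T m by rewrite inE.
have -> : disj_row S = row (enum_rank_in Sm S) (disj_span m).
  by rewrite rowK enum_rankK_in.
exact: row_sub.
Qed.

Lemma natr_cardsD (A C : {set T}) :
  #|A :\: C|%:R = \sum_(a in A) (a \notin C)%:R :> R.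
Proof.
rewrite -sum1_card natr_sum.
rewrite [RHS](eq_bigr (fun a => if a \notin C then 1 else 0)).
  by rewrite -big_mkcondr; apply: eq_bigl => a; rewrite inE andbC.
by move=> a _; case: (a \notin C).
Qed.

Definition cardD_row (A : {set T}) (c : R) : 'rV[R]_N :=
  \row_j (#|A :\: B j|%:R + c).

(* [#|A :\: C| = \sum_(a in A) (a \notin C)], and [a |: S] misses [C] exactly
   when both [a] and [S] do. *)
Lemma disj_row_mul_cardD (A S : {set T}) (c : R) :
  disj_row S *m diag_mx (cardD_row A c) =
  c *: disj_row S + \sum_(a in A) disj_row (a |: S).
Proof.
apply/rowP => j; rewrite mul_mx_diag !mxE summxE natr_cardsD.
have disjU a : [disjoint a |: S & B j] = (a \notin B j) && [disjoint S & B j].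
  by rewrite !disjoints_subset subUset sub1set inE.
case: (boolP [disjoint S & B j]) => disjS.
- rewrite mul1r mulr1 addrC; congr (_ + _); apply: eq_bigr => a _.
  by rewrite mxE disjU disjS andbT.
- rewrite mul0r mulr0 add0r big1 // => a _.
  by rewrite mxE disjU (negbTE disjS) andbF.
Qed.

Lemma disj_span_mul_cardD m (A : {set T}) (c : R) (v : 'rV[R]_N) :
  (v <= disj_span m)%MS ->
  (v *m diag_mx (cardD_row A c) <= disj_span m.+1)%MS.
Proof.
move=> /submxMr/submx_trans; apply; apply/row_subP => i.
rewrite row_mul rowK disj_row_mul_cardD.
have leSm : (#|enum_val i| <= m)%N by have := enum_valP i; rewrite inE.
apply: addmx_sub; first by rewrite scalemx_sub // disj_row_sub // leqW.
apply: summx_sub => a _; apply: disj_row_sub.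
by rewrite cardsU1; case: (a \notin _); rewrite ?ltnS // leqW.
Qed.

Definition prod_cardD_row (A : {set T}) (cs : seq R) : 'rV[R]_N :=
  \row_j \prod_(c <- cs) (#|A :\: B j|%:R + c).

Lemma prod_cardD_row_sub (A : {set T}) (cs : seq R) :
  (prod_cardD_row A cs <= disj_span (size cs))%MS.
Proof.
elim: cs => [|c cs IHcs].
  have -> : prod_cardD_row A [::] = disj_row set0.
    by apply/rowP => j; rewrite !mxE big_nil disjoints_subset sub0set.
  by rewrite disj_row_sub ?cards0.
have -> : prod_cardD_row A (c :: cs) =
    prod_cardD_row A cs *m diag_mx (cardD_row A c).
  by apply/rowP => j; rewrite mul_mx_diag !mxE big_cons mulrC.
exact: disj_span_mul_cardD.
Qed.

End DisjointnessRows.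

Lemma logn_pfactor_subn p k l : prime p -> 0 < l < p ^ k ->
  logn p (p ^ k - l) <= logn p l.
Proof.
move=> p_pr /andP[l_gt0 ltlq]; rewrite leqNgt; apply/negP => ltlog.
have dvd_ql : p ^ (logn p l).+1 %| p ^ k - l by rewrite pfactor_dvdn ?subn_gt0.
have lt_log_k : logn p l < k.
  rewrite -(ltn_exp2l _ _ (prime_gt1 p_pr)); apply: leq_ltn_trans ltlq.
  by apply: dvdn_leq => //; rewrite pfactor_dvdn.
have : p ^ (logn p l).+1 %| p ^ k - (p ^ k - l).
  by apply: dvdn_sub => //; apply: dvdn_exp2l.
by rewrite subKn ?(ltnW ltlq) // pfactor_dvdn // ltnn.
Qed.

Lemma prod_subn_gt0 q L : subset_range L q -> 0 < \prod_(l <- L) (q - l).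
Proof.
move=> rangeL; rewrite big_seq_cond; apply: prodn_cond_gt0 => l /andP[Ll _].
by have /andP[_] := allP rangeL l Ll; rewrite subn_gt0.
Qed.

Lemma logn_prod_subn p k L : prime p -> subset_range L (p ^ k) ->
  logn p (\prod_(l <- L) (p ^ k - l)) <= \sum_(l <- L) logn p l.
Proof.
move=> p_pr; elim: L => [|l L IHL] /=; first by rewrite !big_nil logn1.
case/andP=> l_range rangeL; rewrite !big_cons lognM ?prod_subn_gt0 //.
  by rewrite leq_add ?IHL ?logn_pfactor_subn.
by case/andP: l_range => _; rewrite subn_gt0.
Qed.

Lemma dvdn_prod_addn_subn q x l0 L : l0 \in L -> l0 <= q -> x = l0 %[mod q] ->
  q %| \prod_(l <- L) (x + (q - l)).
Proof.
move=> Ll0 le_l0q x_l0; rewrite (big_rem l0 Ll0) /=; apply: dvdn_mulr.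
by rewrite /dvdn -modnDml x_l0 modnDml subnKC ?modnn.
Qed.

(* All entries are divisible by [p ^ logn p d]; after dividing it out the matrix
   is congruent to a nonzero scalar matrix modulo [p]. *)
Lemma unitmx_pdominant_diag (R : numFieldType) p N d (E : 'I_N -> 'I_N -> nat) :
  prime p -> 0 < d -> (forall i, E i i = d) ->
  (forall i j, i != j -> p ^ (logn p d).+1 %| E i j) ->
  (\matrix_(i, j) (E i j)%:R : 'M[R]_N)%R \in unitmx.
Proof.
move=> p_pr d_gt0 Ediag Eoff; set s := logn p d.
have dvd_d : p ^ s %| d by rewrite pfactor_dvdn.
have dvdE i j : p ^ s %| E i j.
  case: (eqVneq i j) => [<-|neq_ij]; first by rewrite Ediag.
  exact: dvdn_trans (dvdn_exp2l p (leqnSn s)) (Eoff i j neq_ij).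
have Eoff' i j : i != j -> p %| E i j %/ p ^ s.
  move=> /Eoff; rewrite -{1}(divnK (dvdE i j)) expnS.
  by rewrite dvdn_pmul2r ?expn_gt0 ?prime_gt0.
have d'_ndvd : ~~ (p %| d %/ p ^ s).
  apply: contraFN (ltnn s) => /(dvdn_mul (dvdnn (p ^ s))).
  by rewrite [_ * (_ %/ _)]mulnC divnK // -expnSr pfactor_dvdn.
pose E' : 'M[int]_N := (\matrix_(i, j) (E i j %/ p ^ s)%:Z)%R.
have modpE' : map_mx (intr : int -> 'F_p) E' = ((d %/ p ^ s)%:R)%:M%R.
  apply/matrixP => i j; rewrite !mxE /=.
  case: (eqVneq i j) => [->|neq_ij]; first by rewrite Ediag mulr1n.
  by rewrite mulr0n; apply/eqP; rewrite -(dvdn_pcharf (pchar_Fp p_pr)) Eoff'.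
have detE' : (\det E' != 0)%R.
  apply: contraNneq d'_ndvd => detE'0.
  have := det_map_mx (intr : {rmorphism int -> 'F_p}) E'.
  rewrite modpE' det_scalar detE'0 rmorph0 => /eqP.
  by rewrite expf_eq0 -(dvdn_pcharf (pchar_Fp p_pr)) => /andP[].
have -> : (\matrix_(i, j) (E i j)%:R =
          (p ^ s)%:R *: map_mx intr E' :> 'M[R]_N)%R.
  by apply/matrixP => i j; rewrite !mxE /= pmulrn -natrM mulnC divnK.
rewrite unitmxZ ?unitfE ?pnatr_eq0 -?lt0n ?expn_gt0 ?prime_gt0 //.
by rewrite unitmxE unitfE (det_map_mx (intr : {rmorphism int -> R})) intr_eq0.
Qed.

Theorem mainTheorem12 (p k n : nat) (L : seq nat) (F : {set {set 'I_n}}) :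
  prime p -> uniq L -> subset_range L (p ^ k) ->
  modular_L_differencing_Sperner (p ^ k) L F ->
  \sum_(l <- L) logn p l < k ->
  #|F| <= \sum_(0 <= i < (size L).+1) 'C(n, i).
Proof.
move=> p_pr _ rangeL spernerF sum_log_lt_k; set q := p ^ k.
pose B (i : 'I_#|F|) : {set 'I_n} := enum_val i.
pose E i j := \prod_(l <- L) (#|B i :\: B j| + (q - l)).
set d := \prod_(l <- L) (q - l).
have Ediag i : E i i = d.
  by rewrite /E setDv cards0; under eq_bigr do rewrite add0n.
have Eoff i j : i != j -> p ^ (logn p d).+1 %| E i j.
  move=> neq_ij; have neq_B : B i != B j.
    by apply: contra neq_ij => /eqP/enum_val_inj ->.
  have [l0 Ll0 mod_l0] := spernerF _ _ (enum_valP i) (enum_valP j) neq_B.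
  apply: dvdn_trans (dvdn_exp2l p _) (dvdn_prod_addn_subn Ll0 _ mod_l0).
    exact: leq_ltn_trans (logn_prod_subn p_pr rangeL) sum_log_lt_k.
  by have /andP[_ /ltnW] := allP rangeL l0 Ll0.
pose M : 'M[rat]_#|F| := (\matrix_(i, j) (E i j)%:R)%R.
have M_unit : M \in unitmx :=
  unitmx_pdominant_diag _ p_pr (prod_subn_gt0 rangeL) Ediag Eoff.
have M_span : (M <= disj_span rat B (size L))%MS.
  apply/row_subP => i; rewrite -(size_map (fun l => (q - l)%:R%R : rat)).
  suff -> : row i M = prod_cardD_row B (B i) [seq (q - l)%:R%R | l <- L].
    exact: prod_cardD_row_sub.
  apply/rowP => j; rewrite !mxE big_map natr_prod.
  by under eq_bigr do rewrite natrD.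
have := card_small_sets 'I_n (size L); rewrite card_ord => <-.
rewrite -(mxrank_unit M_unit).
exact: leq_trans (mxrankS M_span) (rank_leq_row _).
Qed.
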